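(* Let $\phi:\mathcal{F}\to\mathbb{R}$ be any function, $\delta\in(0,1)$, $\epsilon_4:=2B_{\text{ref}}\sqrt{\frac{\log(\delta^{-1})}{2n}}$, and $\hat a_-(\epsilon_4):=\min_{f\in\hat{\mathcal{R}}(\epsilon_4)}\phi(f)$, $\hat a_+(\epsilon_4):=\max_{f\in\hat{\mathcal{R}}(\epsilon_4)}\phi(f)$. Let $f^\star\in\mathcal{F}$ be the unique minimizer of $e_{\text{orig}}$ over $\mathcal{F}$. If $f^\star$ satisfies $|L(f^\star,z)-L(f_{\text{ref}},z)|\le B_{\text{ref}}$ for all $z\in\mathcal{Z}$, then $$\mathbb{P}\{\phi(f^\star)\in[\hat a_-(\epsilon_4),\hat a_+(\epsilon_4)]\}\ge1-\delta.$$
   Context: Let $Z$ be a random variable on $\mathcal{Z}=\mathcal{Y}\times\mathcal{X}$; $\mathcal{F}$ a set of measurable functions $\mathcal{X}\to\mathcal{Y}$; $L:\mathcal{F}\times\mathcal{Z}\to\mathbb{R}_{\ge0}$ a nonnegative loss; data are $n\ge2$ i.i.d. copies $Z_1,\dots,Z_n$ of $Z$. $e_{\text{orig}}(f)=\mathbb{E}L(f,Z)$, $\hat e_{\text{orig}}(f)=\frac1n\sum_iL(f,Z_i)$. A reference model $f_{\text{ref}}\in\mathcal{F}$ is fixed in advance (not data dependent), and $\hat{\mathcal{R}}(\epsilon)=\{f_{\text{ref}}\}\cup\{f\in\mathcal{F}:\hat e_{\text{orig}}(f)\le\hat e_{\text{orig}}(f_{\text{ref}})+\epsilon\}$. The minima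 and maxima above are assumed to exist. *)

From HB Require Import structures.
From mathcomp Require Import all_boot all_order all_algebra.
From mathcomp Require Import all_classical all_reals all_analysis.
Set Implicit Arguments. Unset Strict Implicit. Unset Printing Implicit Defensive.
Import Order.TTheory GRing.Theory Num.Theory.
Local Open Scope classical_set_scope.
Local Open Scope ring_scope.

(* Mutual independence of a finite family of random variables Zs i : Omega -> T,
   i : 'I_n : product rule for preimages of measurable sets (taking A i = setT
   recovers every finite subfamily). *)
Definition mutually_independent {d dT : measure_display} {R : realType}
  {Omega : measurableType d} {T : measurableType dT}
  (P : probability Omega R) (n : nat) (Zs : 'I_n -> Omega -> T) : Prop :=
  forall A : 'I_n -> set T, (forall i, measurable (A i)) ->
    P (\bigcap_(i in [set: 'I_n]) (Zs i @^-1` A i)) =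
    (\prod_(i < n) P (Zs i @^-1` A i))%E.

Definition identically_distributed {d dT : measure_display} {R : realType}
  {Omega : measurableType d} {T : measurableType dT}
  (P : probability Omega R) (Z1 Z2 : Omega -> T) : Prop :=
  forall A : set T, measurable A -> P (Z1 @^-1` A) = P (Z2 @^-1` A).

(* e_orig(f) = E L(f, Z), as an extended real (L >= 0, so always defined). *)
Definition e_orig {d : measure_display} {R : realType} {Omega : measurableType d}
  {F Zt : Type} (P : probability Omega R) (L : F -> Zt -> R)
  (Z : Omega -> Zt) (f : F) : \bar R :=
  (\int[P]_w (L f (Z w))%:E)%E.

Definition e_hat {Omega F Zt : Type} {R : realType} (n : nat)
  (L : F -> Zt -> R) (Zs : 'I_n -> Omega -> Zt) (f : F) (w : Omega) : R :=
  n%:R^-1 * \sum_(i < n) L f (Zs i w).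

Definition rashomon_hat {Omega F Zt : Type} {R : realType} (n : nat)
  (Fs : set F) (L : F -> Zt -> R) (Zs : 'I_n -> Omega -> Zt) (fref : F)
  (eps : R) (w : Omega) : set F :=
  [set fref] `|` [set f | Fs f /\ e_hat L Zs f w <= e_hat L Zs fref w + eps].

Definition is_min_over {F : Type} {R : realType} (phi : F -> R) (S : set F) (m : R) :=
  (exists2 f, S f & phi f = m) /\ (forall f, S f -> m <= phi f).
Definition is_max_over {F : Type} {R : realType} (phi : F -> R) (S : set F) (m : R) :=
  (exists2 f, S f & phi f = m) /\ (forall f, S f -> phi f <= m).

(* Put g := L fstar - L fref. Whenever sum_i g(Z_i) <= n eps_4, the model fstar
   itself belongs to the empirical Rashomon set, so phi fstar lies between the
   minimum and the maximum of phi over it. The g(Z_i) are i.i.d., bounded by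
   Bref, and have nonpositive mean since fstar minimises the risk (its risk is
   finite, for otherwise uniqueness would force fref = fstar). Hoeffding's
   inequality bounds the probability of sum_i g(Z_i) > n eps_4 by
   exp (- n eps_4^2 / (2 Bref^2)) = delta. It follows from the Chernoff bound,
   Hoeffding's lemma (convexity of exp together with cosh y <= exp (y^2 / 2)),
   and the factorisation of the moment generating function of the sum, which
   independence gives for indicators and approximation by simple functions
   extends to nonnegative measurable functions. *)

From mathcomp Require Import all_boot all_order all_algebra.
From mathcomp Require Import all_classical all_reals all_analysis.
From mathcomp Require Import measurable_realfun ring lra.
Import Order.TTheory GRing.Theory Num.Theory.
Import numFieldNormedType.Exports.
Import HBNNSimple.
Set Implicit Arguments. Unset Strict Implicit. Unset Printing Implicit Defensive.
Local Open Scope classical_set_scope.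
Local Open Scope ring_scope.

Lemma expn_fact_leq_fact_double (j : nat) : (2 ^ j * j`! <= (2 * j)`!)%N.
Proof.
elim: j => [//|j IH].
rewrite mulnS !factS expnS.
rewrite (_ : 2 * 2 ^ j * (j.+1 * j`!) = (2 * j.+1) * (2 ^ j * j`!))%N; last by ring.
apply: leq_mul; first by rewrite mulnS.
exact: leq_trans IH (leq_pmull _ _).
Qed.

Section exp_bounds.
Context {R : realType}.

Lemma sum_nat_pairs (a : nat -> R) (N : nat) :
  \sum_(0 <= k < 2 * N) a k = \sum_(0 <= j < N) (a (2 * j)%N + a (2 * j).+1).
Proof.
elim: N => [|N IH]; first by rewrite !big_geq.
by rewrite mulnS !big_nat_recr //= IH addrA.
Qed.

Lemma expR_add_expRN_le (y : R) : expR y + expR (- y) <= 2 * expR (y ^+ 2 / 2).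
Proof.
pose c : R^nat := fun k => exp_coeff y k + exp_coeff (- y) k.
pose e := exp_coeff (y ^+ 2 / 2).
have cE : c = exp_coeff y + exp_coeff (- y) by [].
have c_ge0 k : 0 <= c k.
  rewrite /c /exp_coeff /= -mulrDl divr_ge0 //.
  rewrite exprNn -signr_odd; have [_|k_even] := boolP (odd k).
    by rewrite expr1 mulN1r subrr.
  by rewrite expr0 mul1r addr_ge0 // exprn_even_ge0.
have c_pair j : c (2 * j)%N + c (2 * j).+1 <= 2 * e j.
  have sqrNy k : (- y) ^+ (2 * k) = y ^+ (2 * k) by rewrite exprM sqrrN -exprM.
  rewrite /c /e /exp_coeff /= (exprS y (2 * j)) (exprS (- y) (2 * j)) sqrNy.
  rewrite mulNr mulNr subrr addr0 -(mul1r (y ^+ _ / _)) -mulrDl.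
  rewrite ler_wpM2l // expr_div_n -exprM -mulrA ler_wpM2l ?exprn_even_ge0 ?oddM //.
  rewrite -invfM lef_pV2 ?posrE ?mulr_gt0 ?exprn_gt0 ?ltr0n ?fact_gt0 //.
  by rewrite -natrX -natrM ler_nat expn_fact_leq_fact_double.
have cvg_c : cvgn (series c).
  by rewrite cE; apply: is_cvg_seriesD; exact: is_cvg_series_exp_coeff.
have -> : expR y + expR (- y) = limn (series c).
  by rewrite cE lim_seriesD //; exact: is_cvg_series_exp_coeff.
have cvg_e : cvgn (series e) by exact: is_cvg_series_exp_coeff.
have -> : 2 * expR (y ^+ 2 / 2) = limn (2 *: series e) by rewrite limZl_tmp.
apply: ler_lim => //; first exact: is_cvgZl_tmp.
near=> N; apply: (@le_trans _ _ (series c (2 * N)%N)).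
  rewrite /series /= [leRHS](big_cat_nat _ (n := N)) //=; last by rewrite leq_pmull.
  by rewrite lerDl sumr_ge0.
have -> : (2 *: series e) N = 2 * series e N by [].
rewrite /series /= sum_nat_pairs mulr_sumr.
by apply: ler_sum => j _; exact: c_pair.
Unshelve. all: by end_near.
Qed.

Lemma expR_le_chord (B s x : R) : 0 < B -> `|x| <= B ->
  expR (s * x) <= (expR (s * B) + expR (- (s * B))) / 2
                  + (expR (s * B) - expR (- (s * B))) / (2 * B) * x.
Proof.
move=> B_gt0; rewrite ler_norml => /andP[xlo xhi].
have t_ge0 : 0 <= (B + x) / (2 * B) by rewrite divr_ge0 //; lra.
have t_le1 : (B + x) / (2 * B) <= 1 by rewrite ler_pdivrMr; lra.
have := convex_expR (Itv01 t_ge0 t_le1) (s * B) (- (s * B)).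
rewrite !convRE /= /unstable.onem.
have -> : (B + x) / (2 * B) * (s * B) + (1 - (B + x) / (2 * B)) * - (s * B) = s * x.
  by field; lra.
move/le_trans; apply; rewrite le_eqVlt; apply/orP; left; apply/eqP.
by field; lra.
Qed.

End exp_bounds.

Section bounded_random_variable.
Context d (Omega : measurableType d) (R : realType) (P : probability Omega R).
Variables (h : Omega -> R) (B : R).
Hypotheses (mh : measurable_fun setT h) (h_bound : forall w, `|h w| <= B).

Lemma integrable_bounded : P.-integrable setT (EFin \o h).
Proof.
apply: measurable_bounded_integrable => //; first by rewrite -ge0_fin_numE // fin_num_measure.
exists B; split; first exact: num_real.
by move=> M BM w _; exact: le_trans (h_bound w) (ltW BM).
Qed.

Lemma hoeffding_lemma (s : R) : 0 < B -> 0 <= s -> (\int[P]_w (h w)%:E <= 0)%E ->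
  (\int[P]_w (expR (s * h w))%:E <= (expR ((s * B) ^+ 2 / 2))%:E)%E.
Proof.
move=> B_gt0 s_ge0 Eh_le0.
set a := (expR (s * B) + expR (- (s * B))) / 2.
set b := (expR (s * B) - expR (- (s * B))) / (2 * B).
have b_ge0 : 0 <= b.
  have sB_ge0 : 0 <= s * B by rewrite mulr_ge0 // ltW.
  apply: divr_ge0; last by rewrite mulr_ge0 // ltW.
  by rewrite subr_ge0 ler_expR; lra.
apply: (@le_trans _ _ (\int[P]_w (a + b * h w)%:E)%E).
  apply: ge0_le_integral => //.
  - apply/measurable_EFinP; apply: measurableT_comp => //.
    exact: measurable_funM.
  - apply/measurable_EFinP; apply: measurable_funD => //.
    exact: measurable_funM.
  - by move=> w _; rewrite lee_fin expR_le_chord.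
under eq_integral do rewrite EFinD (EFinM b).
rewrite integralD //; last 2 first.
- exact: finite_measure_integrable_cst.
- exact/integrableZl/integrable_bounded.
rewrite integralZl //; last exact: integrable_bounded.
rewrite integral_cst // [X in (a%:E * X)%E](_ : _ = 1%E) ?mule1; last first.
  exact: probability_setT.
apply: (@le_trans _ _ a%:E).
  by rewrite geeDl // mule_ge0_le0 // lee_fin.
rewrite lee_fin /a ler_pdivrMr //.
by have := expR_add_expRN_le (s * B); lra.
Qed.

End bounded_random_variable.

Section integral_comp.
Context d dT (Omega : measurableType d) (T : measurableType dT) (R : realType).
Variables (mu : {measure set Omega -> \bar R}) (Z : Omega -> T).
Hypothesis mZ : measurable_fun setT Z.
Local Open Scope ereal_scope.

Lemma integral_indic_comp (A : set T) : measurable A ->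
  \int[mu]_w (\1_A (Z w))%:E = mu (Z @^-1` A).
Proof.
move=> mA; rewrite integral_indic ?setIT //.
by rewrite -[X in measurable X]setTI; exact: mZ.
Qed.

Lemma measurable_indic_comp (A : set T) : measurable A ->
  measurable_fun setT (fun w => \1_A (Z w) : R).
Proof. by move=> mA; exact: (measurableT_comp (@measurable_indic _ _ R setT A mA) mZ). Qed.

Section weighted.
Variable G : Omega -> R.
Hypotheses (mG : measurable_fun setT G) (G_ge0 : forall w, (0 <= G w)%R).

Lemma integral_nnsfun_compM (f : {nnsfun T >-> R}) :
  \int[mu]_w (f (Z w) * G w)%:E =
  \sum_(y \in range f) y%:E * \int[mu]_w (\1_(f @^-1` [set y]) (Z w) * G w)%:E.
Proof.
under eq_integral => w _ do rewrite fimfunE mulr_fsuml -fsumEFin //.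
rewrite ge0_integral_fsum //.
- apply: eq_fsbigr => y /[!inE] -[t _ <-].
  under eq_integral do rewrite -mulrA EFinM.
  rewrite ge0_integralZl_EFin //.
  + by move=> w _; rewrite lee_fin mulr_ge0.
  + apply/measurable_EFinP; apply: measurable_funM => //.
    exact: measurable_indic_comp.
- move=> y; apply/measurable_EFinP; apply: measurable_funM => //.
  apply: measurable_funM => //; exact: measurable_indic_comp.
- move=> y w _; rewrite lee_fin mulr_ge0 //.
  by have := nnfun_muleindic_ge0 f y (Z w); rewrite -EFinM lee_fin.
Qed.

Lemma integral_compM_nnsfun_approx (h : T -> R) (mh : measurable_fun setT (EFin \o h)) :
  (forall t, 0 <= h t)%R ->
  \int[mu]_w (h (Z w) * G w)%:E =
  limn (fun n => \int[mu]_w (nnsfun_approx measurableT mh n (Z w) * G w)%:E).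
Proof.
move=> h_ge0; rewrite -monotone_convergence //.
- apply: eq_integral => w _; apply/esym/cvg_lim => //.
  under eq_fun do rewrite EFinM.
  rewrite EFinM; apply: cvgeZr => //.
  exact: (cvg_nnsfun_approx measurableT mh (fun t _ => h_ge0 t)).
- move=> n; apply/measurable_EFinP; apply: measurable_funM => //.
  exact: measurableT_comp.
- by move=> n w _; rewrite lee_fin mulr_ge0.
- move=> w _ a b ab; rewrite lee_fin ler_wpM2r //.
  exact/lefP/nd_nnsfun_approx.
Qed.

End weighted.

(* Linearity extends the hypothesis from indicators to simple functions, and
   monotone convergence from simple functions to [h]. *)
Lemma ge0_integral_compM_of_indic (G : Omega -> R) (c : \bar R) :
  measurable_fun setT G -> (forall w, 0 <= G w)%R -> c \is a fin_num ->
  (forall A, measurable A ->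
    \int[mu]_w (\1_A (Z w) * G w)%:E = c * mu (Z @^-1` A)) ->
  forall h : T -> R, measurable_fun setT h -> (forall t, 0 <= h t)%R ->
  \int[mu]_w (h (Z w) * G w)%:E = c * \int[mu]_w (h (Z w))%:E.
Proof.
move=> mG G_ge0 c_fin G_indic h mh h_ge0.
have mh' : measurable_fun setT (EFin \o h) by exact/measurable_EFinP.
have m1 : measurable_fun setT (cst 1%R : Omega -> R) by exact: measurable_cst.
have one_ge0 (w : Omega) : (0 <= cst 1 w :> R)%R by [].
under [in RHS]eq_integral do rewrite -[X in X%:E]mulr1.
rewrite (integral_compM_nnsfun_approx mG G_ge0 mh' h_ge0).
rewrite (integral_compM_nnsfun_approx m1 one_ge0 mh' h_ge0).
set hn := nnsfun_approx measurableT mh'.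
have simple n : \int[mu]_w (hn n (Z w) * G w)%:E =
    c * \int[mu]_w (hn n (Z w) * cst 1%R w)%:E.
  rewrite !integral_nnsfun_compM // ge0_mule_fsumr; last first.
    move=> y; under eq_integral do rewrite mulr1.
    rewrite integral_indic_comp //.
    have [y_ge0|y_lt0] := leP 0%R y; first by rewrite mule_ge0.
    suff -> : hn n @^-1` [set y] = set0 by rewrite preimage_set0 measure0 mule0.
    apply/seteqP; split => // t /= hnt; move: y_lt0; rewrite -hnt.
    by rewrite ltNge fun_ge0.
  apply: eq_fsbigr => y _.
  under [in RHS]eq_integral do rewrite mulr1.
  by rewrite G_indic // integral_indic_comp // muleCA.
under eq_fun do rewrite simple.
rewrite limeMl //; apply: cvgP; apply: ereal_nondecreasing_is_cvgn => a b ab.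
apply: ge0_le_integral => //.
- by move=> w _; rewrite lee_fin mulr1.
- apply/measurable_EFinP; apply: measurable_funM => //; exact: measurableT_comp.
- apply/measurable_EFinP; apply: measurable_funM => //; exact: measurableT_comp.
- by move=> w _; rewrite lee_fin !mulr1; exact/lefP/nd_nnsfun_approx.
Qed.

End integral_comp.

Section independent_product.
Context d dT (Omega : measurableType d) (T : measurableType dT) (R : realType).
Variables (P : probability Omega R) (n : nat) (Zs : 'I_n -> Omega -> T).
Hypotheses (mZs : forall i, measurable_fun setT (Zs i))
  (Zs_indep : mutually_independent P Zs).
Local Open Scope ereal_scope.

Lemma integral_prod_indic (A : 'I_n -> set T) : (forall i, measurable (A i)) ->
  \int[P]_w (\prod_i \1_(A i) (Zs i w))%:E =
  \prod_i \int[P]_w (\1_(A i) (Zs i w))%:E.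
Proof.
move=> mA.
have prod_indic w : (\prod_i \1_(A i) (Zs i w))%R =
    \1_(\bigcap_(i in [set: 'I_n]) (Zs i @^-1` A i)) w :> R.
  have [in_all|] := pselect (forall i, A i (Zs i w)).
    rewrite indicE mem_set; last by move=> i _; exact: in_all.
    by rewrite big1 // => i _; rewrite indicE mem_set.
  move=> /existsNP[i0 notin_i0].
  rewrite (bigD1 i0) //= indicE memNset // mul0r indicE memNset //.
  by move=> /(_ i0 I).
have mcap : measurable (\bigcap_(i in [set: 'I_n]) (Zs i @^-1` A i)).
  apply: fin_bigcap_measurable => // i _.
  by rewrite -[X in measurable X]setTI; exact: mZs.
under eq_integral do rewrite prod_indic.
rewrite integral_indic // setIT.
transitivity (\prod_i P (Zs i @^-1` A i)); first exact: Zs_indep.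
by apply: eq_bigr => i _; rewrite integral_indic_comp.
Qed.

Variable e : 'I_n -> T -> R.
Hypotheses (me : forall i, measurable_fun setT (e i))
  (e_ge0 : forall i t, (0 <= e i t)%R)
  (e_fin : forall i, \int[P]_w (e i (Zs i w))%:E \is a fin_num).

(* Induction on [k] replaces the indicators by the [e i] one coordinate at a
   time; for [k = 0] the product rule is the definition of independence. *)
Definition mixed_family (k : nat) (A : 'I_n -> set T) (i : 'I_n) : T -> R :=
  if (i < k)%N then e i else \1_(A i).

Lemma mixed_family_ge0 k A i t : (0 <= mixed_family k A i t)%R.
Proof. by rewrite /mixed_family; case: ifP. Qed.

Lemma measurable_mixed_family k A i : measurable (A i) ->
  measurable_fun setT (mixed_family k A i).
Proof. by move=> mA; rewrite /mixed_family; case: ifP => _ //; exact: measurable_indic. Qed.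

Lemma mixed_family_integral_fin_num k A i : measurable (A i) ->
  \int[P]_w (mixed_family k A i (Zs i w))%:E \is a fin_num.
Proof.
move=> mA; rewrite /mixed_family; case: ifP => _ //.
by rewrite integral_indic_comp // fin_num_measure // -[X in measurable X]setTI; exact: mZs.
Qed.

Definition integral_prod_rule (k : nat) : Prop := forall A : 'I_n -> set T,
  (forall i, measurable (A i)) ->
  \int[P]_w (\prod_i mixed_family k A i (Zs i w))%:E =
  \prod_i \int[P]_w (mixed_family k A i (Zs i w))%:E.

Lemma integral_prod_rule_indic k (i0 : 'I_n) (A : 'I_n -> set T) (B : set T) :
  integral_prod_rule k -> (k <= i0)%N -> (forall i, measurable (A i)) ->
  measurable B ->
  \int[P]_w (\1_B (Zs i0 w) * \prod_(i | i != i0) mixed_family k A i (Zs i w))%:E =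
  (\prod_(i | i != i0) \int[P]_w (mixed_family k A i (Zs i w))%:E) * P (Zs i0 @^-1` B).
Proof.
move=> prod_rule ki0 mA mB; pose AB i := if i == i0 then B else A i.
have mAB i : measurable (AB i) by rewrite /AB; case: ifP.
have mixedB i : i != i0 -> mixed_family k AB i = mixed_family k A i.
  by move=> /negbTE ii0; rewrite /mixed_family /AB ii0.
have mixedB_i0 : mixed_family k AB i0 = \1_B by rewrite /mixed_family /AB eqxx ltnNge ki0.
have := prod_rule AB mAB.
rewrite (bigD1 i0) //= mixedB_i0.
under eq_integral do rewrite (bigD1 i0) //= mixedB_i0.
under eq_integral do under eq_bigr => i ii0 do rewrite mixedB //.
under eq_bigr => i ii0 do rewrite mixedB //.
by move=> ->; rewrite integral_indic_comp // muleC.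
Qed.

Lemma integral_prod_ruleS k (kn : (k < n)%N) :
  integral_prod_rule k -> integral_prod_rule k.+1.
Proof.
move=> prod_rule A mA; pose i0 : 'I_n := Ordinal kn.
have mixedS i : i != i0 -> mixed_family k.+1 A i = mixed_family k A i.
  move=> ii0; rewrite /mixed_family ltnS leq_eqVlt.
  suff -> : (nat_of_ord i == k) = false by [].
  by apply: contraNF ii0 => /eqP ik; apply/eqP/val_inj.
have mixed_i0 : mixed_family k.+1 A i0 = e i0 by rewrite /mixed_family ltnSn.
pose G w := (\prod_(i | i != i0) mixed_family k A i (Zs i w))%R.
have mG : measurable_fun setT G.
  have -> : G = fun w =>
      (\prod_i (if i != i0 then mixed_family k A i (Zs i w) else 1))%R.
    by apply/funext => w; rewrite /G big_mkcond.
  apply: measurable_prod => i _; case: (i != i0); last exact: measurable_cst.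
  by apply: measurableT_comp => //; exact: measurable_mixed_family.
have G_ge0 w : (0 <= G w)%R by apply: prodr_ge0 => i _; exact: mixed_family_ge0.
have c_fin : \prod_(i | i != i0) \int[P]_w (mixed_family k A i (Zs i w))%:E
    \is a fin_num.
  by apply: prode_fin_num => i _; exact: mixed_family_integral_fin_num.
transitivity (\int[P]_w (e i0 (Zs i0 w) * G w)%:E).
  apply: eq_integral => w _; congr EFin; rewrite (bigD1 i0) //= mixed_i0.
  by congr (_ * _)%R; apply: eq_bigr => i ii0; rewrite mixedS.
rewrite (ge0_integral_compM_of_indic (mZs i0) mG G_ge0 c_fin _ (me i0) (e_ge0 i0)).
  rewrite [RHS](bigD1 i0) //= mixed_i0 muleC; congr (_ * _).
  by apply: eq_bigr => i ii0; rewrite mixedS.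
by move=> B mB; exact: integral_prod_rule_indic.
Qed.

Lemma mutually_independent_integral_prod :
  \int[P]_w (\prod_i e i (Zs i w))%:E = \prod_i \int[P]_w (e i (Zs i w))%:E.
Proof.
have prod_rule k : (k <= n)%N -> integral_prod_rule k.
  elim: k => [_|k IHk kn]; first exact: integral_prod_indic.
  exact: integral_prod_ruleS (IHk (ltnW kn)).
have := prod_rule n (leqnn n) (fun=> setT) (fun=> measurableT).
rewrite /mixed_family; under eq_integral do under eq_bigr => i _ do rewrite ltn_ord.
by under eq_bigr => i _ do rewrite ltn_ord.
Qed.

End independent_product.

Lemma identically_distributed_integral d dT (Omega : measurableType d)
    (T : measurableType dT) (R : realType) (P : probability Omega R)
    (Z1 Z2 : Omega -> T) (f : T -> R) :
  measurable_fun setT Z1 -> measurable_fun setT Z2 ->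
  identically_distributed P Z1 Z2 ->
  measurable_fun setT f -> (forall t, 0 <= f t) ->
  (\int[P]_w (f (Z1 w))%:E = \int[P]_w (f (Z2 w))%:E)%E.
Proof.
move=> mZ1 mZ2 Z12 mf f_ge0.
have mf' : measurable_fun setT (EFin \o f) by exact/measurable_EFinP.
have f_ge0' : {in setT, forall y, (0 <= (f y)%:E)%E} by move=> y _; rewrite lee_fin.
transitivity (\int[pushforward P Z1]_(y in setT) (f y)%:E)%E.
  by rewrite ge0_integral_pushforward.
transitivity (\int[pushforward P Z2]_(y in setT) (f y)%:E)%E.
  by apply: eq_measure_integral => A mA _; exact: Z12.
by rewrite ge0_integral_pushforward.
Qed.

Section level_sets.
Context d (T : measurableType d) (R : realType) (f : T -> R).
Hypothesis mf : measurable_fun setT f.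

Lemma measurable_gt_level (a : R) : measurable [set x | a < f x].
Proof.
have := mf measurableT (measurable_itv `]a, +oo[).
by rewrite setTI; congr measurable; apply/seteqP; split => x /=; rewrite in_itv /= andbT.
Qed.

Lemma measurable_ge_level (a : R) : measurable [set x | a <= f x].
Proof.
have := mf measurableT (measurable_itv `[a, +oo[).
by rewrite setTI; congr measurable; apply/seteqP; split => x /=; rewrite in_itv /= andbT.
Qed.

End level_sets.

Lemma chernoff_integral d (Omega : measurableType d) (R : realType)
    (P : probability Omega R) (S : Omega -> R) (r a : R) :
  measurable_fun setT S -> 0 < r ->
  (P [set w | (a <= S w)%R] <= \int[P]_w (expR (r * S w))%:E * (expR (- (r * a)))%:E)%E.
Proof.
move=> mS r_gt0; have := @chernoff _ _ _ P (mfun_Sub (mem_set mS : S \in mfun)) r a r_gt0.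
by rewrite /mmt_gen_fun unlock /=; under eq_integral do rewrite mulrC.
Qed.

Lemma hoeffding_radiusE (R : realType) (B delta : R) (n : nat) :
  0 < B -> 0 < delta <= 1 -> (0 < n)%N ->
  expR (- (n%:R * (2 * B * Num.sqrt (ln delta^-1 / (2 * n%:R)))) ^+ 2
        / (2 * n%:R * B ^+ 2)) = delta.
Proof.
move=> B_gt0 /andP[delta_gt0 delta_le1] n_gt0.
have n_neq0 : n%:R != 0 :> R by rewrite pnatr_eq0 -lt0n.
set q := ln delta^-1 / (2 * n%:R).
have q_ge0 : 0 <= q by rewrite divr_ge0 ?mulr_ge0 // ln_ge0 // invf_ge1.
rewrite mulNr.
have -> : (n%:R * (2 * B * Num.sqrt q)) ^+ 2 / (2 * n%:R * B ^+ 2) = ln delta^-1.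
  by rewrite !exprMn sqr_sqrtr // /q; field; rewrite n_neq0 gt_eqF.
by rewrite lnV ?posrE // opprK lnK ?posrE.
Qed.

Section hoeffding.
Context d dT (Omega : measurableType d) (T : measurableType dT) (R : realType).
Variables (P : probability Omega R) (n : nat) (Zs : 'I_n -> Omega -> T) (Z : Omega -> T).
Hypotheses (mZs : forall i, measurable_fun setT (Zs i)) (mZ : measurable_fun setT Z)
  (Zs_indep : mutually_independent P Zs)
  (Zs_id : forall i, identically_distributed P (Zs i) Z).
Variables (g : T -> R) (B : R).
Hypotheses (mg : measurable_fun setT g) (g_bound : forall t, `|g t| <= B)
  (Eg_le0 : (\int[P]_w (g (Z w))%:E <= 0)%E).

Lemma measurable_sum_comp : measurable_fun setT (fun w => \sum_i g (Zs i w)).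
Proof. by apply: measurable_sum => i; exact: measurableT_comp. Qed.

Lemma hoeffding_mgf_sum (s : R) : 0 < B -> 0 <= s ->
  (\int[P]_w (expR (s * \sum_i g (Zs i w)))%:E <=
   (expR (n%:R * ((s * B) ^+ 2 / 2)))%:E)%E.
Proof.
move=> B_gt0 s_ge0.
have mgf_le : (\int[P]_w (expR (s * g (Z w)))%:E <= (expR ((s * B) ^+ 2 / 2))%:E)%E.
  by apply: hoeffding_lemma => //; exact: measurableT_comp.
have mexp : measurable_fun setT (fun t => expR (s * g t)).
  by apply: measurableT_comp => //; exact: measurable_funM.
have mgf_ge0 : (0 <= \int[P]_w (expR (s * g (Z w)))%:E)%E.
  by apply: integral_ge0 => w _; rewrite lee_fin expR_ge0.
have mgf_id i : (\int[P]_w (expR (s * g (Zs i w)))%:E =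
    \int[P]_w (expR (s * g (Z w)))%:E)%E.
  by apply: (identically_distributed_integral (f := fun t => expR (s * g t))).
have mgf_fin : (\int[P]_w (expR (s * g (Z w)))%:E)%E \is a fin_num.
  by rewrite ge0_fin_numE // (le_lt_trans mgf_le) // ltry.
have -> : (fun w => (expR (s * \sum_i g (Zs i w)))%:E) =
    (fun w => (\prod_i expR (s * g (Zs i w)))%:E).
  by apply/funext => w; rewrite mulr_sumr expR_sum.
rewrite (mutually_independent_integral_prod mZs Zs_indep
  (e := fun=> fun t => expR (s * g t))) //; last by move=> i; rewrite mgf_id.
under eq_bigr do rewrite mgf_id.
rewrite -(fineK mgf_fin) prodEFin lee_fin prodr_const card_ord expRM_natl.
apply: lerXn2r; rewrite ?nnegrE ?expR_ge0 ?fine_ge0 //.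
by rewrite -lee_fin fineK.
Qed.

Lemma hoeffding_tail (t : R) : 0 < B -> (0 < n)%N -> 0 < t ->
  (P [set w | (t <= \sum_i g (Zs i w))%R] <=
   (expR (- t ^+ 2 / (2 * n%:R * B ^+ 2)))%:E)%E.
Proof.
move=> B_gt0 n_gt0 t_gt0.
have n_neq0 : n%:R != 0 :> R by rewrite pnatr_eq0 -lt0n.
set r := t / (n%:R * B ^+ 2).
have r_gt0 : 0 < r by rewrite divr_gt0 // mulr_gt0 ?ltr0n ?exprn_gt0.
apply: le_trans (chernoff_integral _ _ measurable_sum_comp r_gt0) _.
apply: le_trans (lee_pmul _ _ (hoeffding_mgf_sum B_gt0 (ltW r_gt0)) (lexx _)) _.
- by apply: integral_ge0 => w _; rewrite lee_fin expR_ge0.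
- by rewrite lee_fin expR_ge0.
rewrite -EFinM -expRD lee_fin ler_expR le_eqVlt; apply/orP; left; apply/eqP.
by rewrite /r; field; rewrite n_neq0 gt_eqF.
Qed.


Lemma hoeffding_deviation (delta : R) : (0 < n)%N -> 0 < delta < 1 ->
  (P [set w | (n%:R * (2 * B * Num.sqrt (ln delta^-1 / (2 * n%:R))) < \sum_i g (Zs i w))%R]
   <= delta%:E)%E.
Proof.
move=> n_gt0 /andP[delta_gt0 delta_lt1].
set t := n%:R * _.
have [B_le0|B_gt0] := leP B 0.
  suff -> : [set w | t < \sum_i g (Zs i w)] = set0 by rewrite measure0 lee_fin ltW.
  apply/seteqP; split => // w /=.
  have B_ge0 : 0 <= B := le_trans (normr_ge0 _) (g_bound (Zs (Ordinal n_gt0) w)).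
  have B0 : B = 0 by apply/eqP; rewrite eq_le B_le0 B_ge0.
  rewrite /t B0 !(mul0r, mulr0) big1 ?ltxx // => i _.
  by apply/eqP; rewrite -normr_le0 -B0.
have t_gt0 : 0 < t.
  rewrite /t !mulr_gt0 ?ltr0n ?sqrtr_gt0 //.
  by rewrite divr_gt0 ?mulr_gt0 ?ltr0n // ln_gt0 // invf_gt1.
have tail := hoeffding_tail B_gt0 n_gt0 t_gt0.
have delta_in : 0 < delta <= 1 by rewrite delta_gt0 ltW.
rewrite /t (hoeffding_radiusE B_gt0 delta_in n_gt0) in tail.
apply: le_trans tail; apply: le_measure; rewrite ?inE.
- exact/measurable_gt_level/measurable_sum_comp.
- exact/measurable_ge_level/measurable_sum_comp.
- by move=> w /ltW.
Qed.

End hoeffding.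

Lemma integral_subr_le0 d (Omega : measurableType d) (R : realType)
    (P : probability Omega R) (u v : Omega -> R) (B : R) :
  measurable_fun setT u -> measurable_fun setT v -> (forall w, 0 <= u w) ->
  (forall w, `|u w - v w| <= B) ->
  (\int[P]_w (u w)%:E < +oo)%E -> (\int[P]_w (u w)%:E <= \int[P]_w (v w)%:E)%E ->
  (\int[P]_w (u w - v w)%:E <= 0)%E.
Proof.
move=> mu mv u_ge0 uv_bound Eu_fin Eu_le.
have mD : measurable_fun setT (fun w => u w - v w) by exact: measurable_funB.
have int_u : P.-integrable setT (EFin \o u).
  apply/integrableP; split; first exact/measurable_EFinP.
  by under eq_integral do rewrite gee0_abs ?lee_fin //.
have int_D : P.-integrable setT (EFin \o (fun w => u w - v w)).
  exact: integrable_bounded uv_bound.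
have int_v : P.-integrable setT (EFin \o v).
  have -> : EFin \o v = (fun w => (u w)%:E - (u w - v w)%:E)%E.
    by apply/funext => w /=; rewrite -EFinB opprB addrC subrK.
  exact: integrableB.
under eq_integral do rewrite EFinB.
by rewrite integralB // sube_le0.
Qed.

Lemma rashomon_hat_sum_le {Omega F Zt : Type} {R : realType} (n : nat)
    (Fs : set F) (L : F -> Zt -> R) (Zs : 'I_n -> Omega -> Zt) (fref f : F)
    (eps : R) (w : Omega) :
  (0 < n)%N -> Fs f -> \sum_i (L f (Zs i w) - L fref (Zs i w)) <= n%:R * eps ->
  rashomon_hat Fs L Zs fref eps w f.
Proof.
move=> n_gt0 Fs_f sum_le; right; split => //.
have n_pos : 0 < n%:R :> R by rewrite ltr0n.
by rewrite /e_hat -lerBlDl -mulrBr -sumrB mulrC ler_pdivrMr // mulrC.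
Qed.

Lemma excess_loss_le0 d dZ (Omega : measurableType d) (Zt : measurableType dZ)
    (R : realType) (P : probability Omega R) (F : Type) (L : F -> Zt -> R)
    (Z : Omega -> Zt) (fref fstar : F) (B : R) :
  measurable_fun setT Z -> measurable_fun setT (L fstar) ->
  measurable_fun setT (L fref) -> (forall z, 0 <= L fstar z) ->
  (forall z, `|L fstar z - L fref z| <= B) ->
  (e_orig P L Z fstar <= e_orig P L Z fref)%E ->
  ((e_orig P L Z fref <= e_orig P L Z fstar)%E -> fref = fstar) ->
  (\int[P]_w (L fstar (Z w) - L fref (Z w))%:E <= 0)%E.
Proof.
move=> mZ mLstar mLref Lstar_ge0 L_bound fstar_le fstar_unique.
have [fref_fstar|fref_neq] := pselect (fref = fstar).
  by under eq_integral do rewrite fref_fstar subrr; rewrite integral0.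
apply: (integral_subr_le0 _ _ _ (fun w => L_bound (Z w))) => //.
- exact: measurableT_comp.
- exact: measurableT_comp.
- rewrite ltNge leye_eq; apply/negP => /eqP Estar_oo.
  by apply: fref_neq; apply: fstar_unique; rewrite /e_orig Estar_oo leey.
Qed.

Theorem proposition11
  (R : realType) (d dX dY : measure_display)
  (Omega : measurableType d) (P : probability Omega R)
  (X : measurableType dX) (Y : measurableType dY)
  (Fs : set (X -> Y))
  (HFs : forall f, Fs f -> measurable_fun setT f)
  (L : (X -> Y) -> (Y * X)%type -> R)
  (HL0 : forall f z, 0 <= L f z)
  (HLmeas : forall f, Fs f -> measurable_fun setT (L f))
  (n : nat) (Hn : (2 <= n)%N)
  (Z : Omega -> (Y * X)%type) (HZ : measurable_fun setT Z)
  (Zs : 'I_n -> Omega -> (Y * X)%type)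
  (HZs : forall i, measurable_fun setT (Zs i))
  (Hind : mutually_independent P Zs)
  (Hid : forall i, identically_distributed P (Zs i) Z)
  (fref : X -> Y) (Hfref : Fs fref)
  (phi : (X -> Y) -> R)
  (delta : R) (Hdelta : 0 < delta < 1)
  (Bref : R)
  (fstar : X -> Y) (Hfstar : Fs fstar)
  (Hmin : forall f, Fs f -> (e_orig P L Z fstar <= e_orig P L Z f)%E)
  (Huniq : forall f, Fs f -> (e_orig P L Z f <= e_orig P L Z fstar)%E -> f = fstar)
  (HB : forall z, `|L fstar z - L fref z| <= Bref)
  (amin amax : Omega -> R)
  (Hamin : forall w, is_min_over phi
     (rashomon_hat Fs L Zs fref (2 * Bref * Num.sqrt (ln delta^-1 / (2 * n%:R))) w)
     (amin w))
  (Hamax : forall w, is_max_over phi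
     (rashomon_hat Fs L Zs fref (2 * Bref * Num.sqrt (ln delta^-1 / (2 * n%:R))) w)
     (amax w)) :
  exists2 A : set Omega, measurable A /\
      A `<=` [set w | amin w <= phi fstar <= amax w] &
    ((1 - delta)%:E <= P A)%E.
Proof.
have n_gt0 : (0 < n)%N by exact: leq_trans Hn.
pose eps := 2 * Bref * Num.sqrt (ln delta^-1 / (2 * n%:R)).
pose g z := L fstar z - L fref z.
have mg : measurable_fun setT g by apply: measurable_funB; exact: HLmeas.
have mS := measurable_sum_comp HZs mg.
pose bad := [set w | n%:R * eps < \sum_i g (Zs i w)].
have Eg_le0 : (\int[P]_w (g (Z w))%:E <= 0)%E.
  exact: (excess_loss_le0 HZ (HLmeas _ Hfstar) (HLmeas _ Hfref) (HL0 fstar) HB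
    (Hmin _ Hfref) (Huniq _ Hfref)).
have P_bad := hoeffding_deviation HZs HZ Hind Hid mg HB Eg_le0 n_gt0 Hdelta.
exists (~` bad); first split.
- exact/measurableC/measurable_gt_level.
- move=> w /negP; rewrite -leNgt => sum_le.
  have fstar_in := rashomon_hat_sum_le (L := L) (fref := fref) n_gt0 Hfstar sum_le.
  by rewrite /= (Hamin w).2 ?(Hamax w).2.
- by rewrite probability_setC ?EFinB ?leeB //; exact: measurable_gt_level.
Qed.
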